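(* Let $\tilde s\mathbf{[x](z,Z)}\to \tilde t\mathbf{[x](z,Z)}$ be a non-trivial $\mathcal L$-justification of $a\to b \mathrel{:\!\cdot} c\to d$ in $(\mathfrak{A,B})$. (1) If, for all $\sigma_\mathfrak B\in g\text-Sub(\mathcal{L,L_\mathfrak B})$, $c^\mathfrak B=(\tilde s\sigma_\mathfrak B)^\mathfrak B$ implies $d^\mathfrak B=(\tilde t\sigma_\mathfrak B)^\mathfrak B$, then $\tilde s\to \tilde t$ is a characteristic $\mathcal L$-justification of $a\to b\mathrel{:\!\cdot} c\to d$ in $(\mathfrak{A,B})$, that is, $(\mathfrak{A,B})\models a\to b\mathrel{:\!\cdot} c\to d$. (2) Consequently, if $c^\mathfrak B=(\tilde s\sigma_\mathfrak B)^\mathfrak B$ iff $d^\mathfrak B=(\tilde s\sigma_\mathfrak B)^\mathfrak B$ for all $\sigma_\mathfrak B\in g\text-Sub(\mathcal{L,L_\mathfrak B})$, and every $\mathcal Z$-variable in $\tilde s$ occurs in $\tilde t$, then $(\mathfrak{A,B})\models a\to b\mathrel{:\!\cdot} c\to d$ and $(\mathfrak{A,B})\models b\to a\mathrel{:\!\cdot} d\to c$. (3) Consequently, if $a^\mathfrak A=(\tilde s\sigma_\mathfrak A)^\mathfrak A$ iff $b^\mathfrak A=(\tilde t\sigma_\mathfrak A)^\mathfrak B$, and $c^\mathfrak B=(\tilde s\sigma_\mathfrak B)^\mathfrak B$ iff $d^\mathfrak B=(\tilde t\sigma_\mathfrak B)^\mathfrak B$, for all $\sigma_\mathfrak A\in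 g\text-Sub(\mathcal{L,L_\mathfrak A})$ and $\sigma_\mathfrak B\in g\text-Sub(\mathcal{L,L_\mathfrak B})$, and every $\mathcal Z$-variable in $\tilde s$ occurs in $\tilde t$, then $(\mathfrak{A,B})\models a:b::c:d$.
   Context: $\mathfrak A$ is an algebra over $\mathcal L_\mathfrak A=\{\dot f_i\mid i\in I\}$ and $\mathfrak B$ an algebra over $\mathcal L_\mathfrak B=\{\dot g_i\mid i\in I\}$ (same index set $I$). $\mathcal L=\{\dot h_i\mid i\in I\}$ with $r_\mathcal L(\dot h_i)=\max\{r(\dot f_i),r(\dot g_i)\}$. Variables: $\mathcal X$-variables $x$ (placeholders for constant symbols), $\mathcal Z$-variables $z$, and hedge variables $Z\in\mathscr Z$ which may be replaced by the empty hedge $\dot\lambda$ (so $\dot h(\dot a,\dot\lambda)$ means $\dot h(\dot a)$). An $\mathcal L$-hedge is an $\mathcal L$-term over these variables; abstract means no constant symbols. A ground $(\mathcal{L,L_\mathfrak A})$-substitution $\sigma_\mathfrak A$ maps each $\dot h_i\mapsto\dot f_i$, $\mathcal X$-variables to constant symbols of $\mathcal L_\mathfrak A$, $\mathcal Z$-variables to ground $\mathcal L_\mathfrak A$-terms and hedge variables to ground $\mathcal L_\mathfrak A$-terms or $\dot\lambda$; $g\text-Sub(\mathcal{L,L_\mathfrak A})$ is the set of these (similarly for $\mathfrak B$). An $\mathcal L$-justification is $\tilde s\to\tilde t$ with $\tilde s,\tilde t$ abstract $\mathcal L$-hedges and every $\mathcal Z$-variable of $\tilde t$ occurring in $\tilde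 s$. For ground terms $a,b$ (of $\mathcal L_\mathfrak A$) and $c,d$ (of $\mathcal L_\mathfrak B$), $Jus_\mathfrak A(a\to b)$ is the set of justifications with $a^\mathfrak A=(\tilde s\sigma_\mathfrak A)^\mathfrak A$, $b^\mathfrak A=(\tilde t\sigma_\mathfrak A)^\mathfrak A$ for some $\sigma_\mathfrak A$; $Jus_{(\mathfrak{A,B})}(a\to b\mathrel{:\!\cdot} c\to d)$ is the set of justifications for which there are $\sigma_\mathfrak A,\sigma_\mathfrak B$ agreeing on $\mathcal X$ with $a^\mathfrak A\to b^\mathfrak A=(\tilde s\sigma_\mathfrak A)^\mathfrak A\to(\tilde t\sigma_\mathfrak A)^\mathfrak A$ and $c^\mathfrak B\to d^\mathfrak B=(\tilde s\sigma_\mathfrak B)^\mathfrak B\to(\tilde t\sigma_\mathfrak B)^\mathfrak B$. A justification is trivial if it lies in every $Jus_\mathfrak A(a\to b)$ and every $Jus_\mathfrak B(c\to d)$. $(\mathfrak{A,B})\models a\to b\mathrel{:\!\cdot} c\to d$ iff either $Jus_\mathfrak A(a\to b)\cup Jus_\mathfrak B(c\to d)$ contains only trivial justifications, or $Jus_{(\mathfrak{A,B})}(a\to b\mathrel{:\!\cdot} c\to d)$ contains a non-trivial justification and is maximal under inclusion among the sets $Jus_{(\mathfrak{A,B})}(a\to b\mathrel{:\!\cdot} c\to d')$ ($d'$ ground, ${d'}^\mathfrak B\neq d^\mathfrak B$) containing a non-trivial justification. $(\mathfrak{A,B})\models a:b::c:d$ iff $a\to b\mathrel{:\!\cdot} c\to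 d$, $b\to a\mathrel{:\!\cdot} d\to c$, $c\to d\mathrel{:\!\cdot} a\to b$, $d\to c\mathrel{:\!\cdot} b\to a$ all hold. A set $J$ is characteristic for $a\to b\mathrel{:\!\cdot} c\to d$ if $J\subseteq Jus_{(\mathfrak{A,B})}(a\to b\mathrel{:\!\cdot} c\to d)$ and $J\subseteq Jus_{(\mathfrak{A,B})}(a\to b\mathrel{:\!\cdot} c\to d')$ implies $d'=d$; a characteristic justification is a singleton such $J$. *)

From Stdlib Require Import List Arith Bool.
Import ListNotations.
Set Implicit Arguments.
Open Scope bool_scope.

(* An algebra over L_A = {f_i | i in I}: carrier, arities r(f_i), and
   interpretations (an n-ary operation is given as a function on lists,
   only ever applied to lists of length n). *)
Record algebra (I : Type) := Algebra {
  carrier : Type;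
  ar : I -> nat;
  op : I -> list carrier -> carrier }.

(* Raw ground terms over symbols indexed by I (GApp i l stands for f_i(l)
   in L_A, resp. g_i(l) in L_B). *)
Inductive gterm (I : Type) : Type :=
| GApp : I -> list (gterm I) -> gterm I.
Arguments GApp {I} _ _.

Fixpoint gwf {I} (r : I -> nat) (t : gterm I) : bool :=
  match t with
  | GApp i l => Nat.eqb (length l) (r i) &&
      (fix all (l : list (gterm I)) : bool :=
         match l with nil => true | x :: l' => gwf r x && all l' end) l
  end.

Fixpoint geval {I} (A : algebra I) (t : gterm I) : carrier A :=
  match t with GApp i l => op A i (map (geval A) l) end.

(* Variables: X-variables (placeholders for constants), Z-variables z,
   and hedge variables Z (may be replaced by the empty hedge). *)
Inductive var : Type := VX (n : nat) | VZ (n : nat) | VH (n : nat).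

(* L-hedges: L-terms over these variables; LApp i l stands for h_i(l). *)
Inductive lterm (I : Type) : Type :=
| LVar : var -> lterm I
| LApp : I -> list (lterm I) -> lterm I.
Arguments LVar {I} _.
Arguments LApp {I} _ _.

Definition Lar {I} (A B : algebra I) (i : I) : nat := Nat.max (ar A i) (ar B i).

Fixpoint lwf {I} (r : I -> nat) (s : lterm I) : Prop :=
  match s with
  | LVar _ => True
  | LApp i l => length l = r i /\
      (fix all (l : list (lterm I)) : Prop :=
         match l with nil => True | x :: l' => lwf r x /\ all l' end) l
  end.

Fixpoint abstractL {I} (r : I -> nat) (s : lterm I) : Prop :=
  match s with
  | LVar _ => True
  | LApp i l => r i <> 0 /\
      (fix all (l : list (lterm I)) : Prop :=
         match l with nil => True | x :: l' => abstractL r x /\ all l' end) l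
  end.

Fixpoint zvars {I} (s : lterm I) : list nat :=
  match s with
  | LVar (VZ n) => [n]
  | LVar _ => nil
  | LApp _ l => flat_map zvars l
  end.

Fixpoint xvars {I} (s : lterm I) : list nat :=
  match s with
  | LVar (VX n) => [n]
  | LVar _ => nil
  | LApp _ l => flat_map xvars l
  end.

(* A ground substitution: h_i |-> f_i (implicit, same index), X-variables
   to constant symbols (indices), Z-variables to ground terms, hedge
   variables to ground terms or the empty hedge (None). *)
Record gsub (I : Type) := GSub {
  sx : nat -> I;
  sz : nat -> gterm I;
  sh : nat -> option (gterm I) }.

Definition gsub_ok {I} (r : I -> nat) (sg : gsub I) : Prop :=
  (forall n, r (sx sg n) = 0) /\
  (forall n, gwf r (sz sg n) = true) /\
  (forall n u, sh sg n = Some u -> gwf r u = true).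

(* applying a substitution to an L-hedge yields a hedge (list) of ground
   terms; the empty hedge disappears from argument lists *)
Fixpoint lsubst {I} (sg : gsub I) (s : lterm I) : list (gterm I) :=
  match s with
  | LVar (VX n) => [GApp (sx sg n) nil]
  | LVar (VZ n) => [sz sg n]
  | LVar (VH n) => match sh sg n with Some u => [u] | None => nil end
  | LApp i l => [GApp i (flat_map (lsubst sg) l)]
  end.

Definition denote {I} (C : algebra I) (sg : gsub I) (s : lterm I)
  : option (carrier C) :=
  match lsubst sg s with
  | [u] => if gwf (ar C) u then Some (geval C u) else None
  | _ => None
  end.

Definition is_just {I} (r : I -> nat) (s t : lterm I) : Prop :=
  lwf r s /\ lwf r t /\ abstractL r s /\ abstractL r t /\
  (forall z, In z (zvars t) -> In z (zvars s)).

Definition Jus1 {I} (r : I -> nat) (C : algebra I) (x y : gterm I)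
  (s t : lterm I) : Prop :=
  is_just r s t /\
  exists sg, gsub_ok (ar C) sg /\
    denote C sg s = Some (geval C x) /\ denote C sg t = Some (geval C y).

Definition JusAB {I} (A B : algebra I) (a b c d : gterm I) (s t : lterm I)
  : Prop :=
  is_just (Lar A B) s t /\
  exists sA sB, gsub_ok (ar A) sA /\ gsub_ok (ar B) sB /\
    (forall n, In n (xvars s ++ xvars t) -> sx sA n = sx sB n) /\
    denote A sA s = Some (geval A a) /\ denote A sA t = Some (geval A b) /\
    denote B sB s = Some (geval B c) /\ denote B sB t = Some (geval B d).

Definition trivial {I} (A B : algebra I) (s t : lterm I) : Prop :=
  (forall a' b', gwf (ar A) a' = true -> gwf (ar A) b' = true ->
     Jus1 (Lar A B) A a' b' s t) /\
  (forall c' d', gwf (ar B) c' = true -> gwf (ar B) d' = true ->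
     Jus1 (Lar A B) B c' d' s t).

Definition nontriv_in {I} (A B : algebra I) (a b c d : gterm I) : Prop :=
  exists s t, JusAB A B a b c d s t /\ ~ trivial A B s t.

Definition models_arrow {I} (A B : algebra I) (a b c d : gterm I) : Prop :=
  (forall s t, (Jus1 (Lar A B) A a b s t \/ Jus1 (Lar A B) B c d s t) ->
     trivial A B s t)
  \/
  (nontriv_in A B a b c d /\
   forall d', gwf (ar B) d' = true -> geval B d' <> geval B d ->
     nontriv_in A B a b c d' ->
     (forall s t, JusAB A B a b c d s t -> JusAB A B a b c d' s t) ->
     (forall s t, JusAB A B a b c d' s t -> JusAB A B a b c d s t)).

Definition models_prop {I} (A B : algebra I) (a b c d : gterm I) : Prop :=
  models_arrow A B a b c d /\ models_arrow A B b a d c /\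
  models_arrow B A c d a b /\ models_arrow B A d c b a.

(* J characteristic for a -> b :. c -> d (d' = d read as equality of values) *)
Definition characteristic {I} (A B : algebra I) (a b c d : gterm I)
  (J : lterm I -> lterm I -> Prop) : Prop :=
  (forall s t, J s t -> JusAB A B a b c d s t) /\
  (forall d', gwf (ar B) d' = true ->
     (forall s t, J s t -> JusAB A B a b c d' s t) -> geval B d' = geval B d).

Definition characteristic_just {I} (A B : algebra I) (a b c d : gterm I)
  (s t : lterm I) : Prop :=
  characteristic A B a b c d (fun s' t' => s' = s /\ t' = t).

(* A justification s -> t for which every B-substitution matching c with s
   sends t to d is characteristic: if s -> t also justifies c -> d', the
   witnessing substitution gives d'^B = (t sigma)^B = d^B.  A characteristic
   set containing a non-trivial justification makes the justification set of
   c -> d maximal, since the only d' whose set can contain it has the value of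
   d.  Parts (2) and (3) apply this to the reversed justification t -> s, which
   is a justification because s and t have the same Z-variables, and to the
   pair (B, A), the definitions being symmetric in the two algebras. *)
From Stdlib Require Import List Arith FunctionalExtensionality.

Set Implicit Arguments.

Section Characteristic.

Variables (I : Type) (A B : algebra I) (a b c d : gterm I).

Lemma characteristic_just_of_determined (s t : lterm I) :
  JusAB A B a b c d s t ->
  (forall sB, gsub_ok (ar B) sB ->
     denote B sB s = Some (geval B c) -> denote B sB t = Some (geval B d)) ->
  characteristic_just A B a b c d s t.
Proof.
  intros HJ Hdet. split.
  - intros s' t' [-> ->]; exact HJ.
  - intros d' _ Hd'.
    destruct (Hd' s t (conj eq_refl eq_refl))
      as [_ [sA [sB [_ [HsB [_ [_ [_ [Hs Ht]]]]]]]]].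
    rewrite (Hdet sB HsB Hs) in Ht.
    injection Ht; auto.
Qed.

Lemma models_arrow_of_characteristic (J : lterm I -> lterm I -> Prop)
    (s t : lterm I) :
  characteristic A B a b c d J -> J s t -> ~ trivial A B s t ->
  models_arrow A B a b c d.
Proof.
  intros [HJ Hchar] Hst Hnt. right. split.
  - exists s, t; auto.
  - intros d' Hd' Hne _ Hincl. exfalso. apply Hne.
    apply (Hchar d' Hd'). intros s' t' Hs't'. apply Hincl, HJ, Hs't'.
Qed.

Lemma models_arrow_of_determined (s t : lterm I) :
  JusAB A B a b c d s t -> ~ trivial A B s t ->
  (forall sB, gsub_ok (ar B) sB ->
     denote B sB s = Some (geval B c) -> denote B sB t = Some (geval B d)) ->
  models_arrow A B a b c d.
Proof.
  intros HJ Hnt Hdet.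
  apply models_arrow_of_characteristic with (s := s) (t := t)
    (J := fun s' t' => s' = s /\ t' = t); auto.
  exact (characteristic_just_of_determined HJ Hdet).
Qed.

Lemma JusAB_rev (s t : lterm I) :
  (forall z, In z (zvars s) -> In z (zvars t)) ->
  JusAB A B a b c d s t -> JusAB A B b a d c t s.
Proof.
  intros Hz [[Hws [Hwt [Has [Hat _]]]]
             [sA [sB [HsA [HsB [Hx [Ea [Eb [Ec Ed]]]]]]]]].
  split; [repeat split; auto |].
  exists sA, sB. do 2 (split; [assumption |]). split; [| auto].
  intros n Hn. apply Hx. rewrite in_app_iff in *. tauto.
Qed.

Lemma trivial_rev (s t : lterm I) :
  is_just (Lar A B) s t -> trivial A B t s -> trivial A B s t.
Proof.
  intros Hj [TA TB]. split.
  - intros a' b' Ha Hb. destruct (TA b' a' Hb Ha) as [_ [sg [G [Es Et]]]].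
    split; [exact Hj |]. exists sg; auto.
  - intros c' d' Hc Hd. destruct (TB d' c' Hd Hc) as [_ [sg [G [Es Et]]]].
    split; [exact Hj |]. exists sg; auto.
Qed.

End Characteristic.

Lemma Lar_comm {I} (A B : algebra I) : Lar A B = Lar B A.
Proof. apply functional_extensionality; intro i; apply Nat.max_comm. Qed.

Lemma JusAB_flip {I} (A B : algebra I) (a b c d : gterm I) (s t : lterm I) :
  JusAB A B a b c d s t -> JusAB B A c d a b s t.
Proof.
  intros [Hj [sA [sB [HsA [HsB [Hx [Ea [Eb [Ec Ed]]]]]]]]].
  split; [rewrite <- Lar_comm; exact Hj |].
  exists sB, sA. do 2 (split; [assumption |]). split; [| auto].
  intros n Hn; symmetry; auto.
Qed.

Lemma trivial_flip {I} (A B : algebra I) (s t : lterm I) :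
  trivial B A s t -> trivial A B s t.
Proof. unfold trivial; rewrite (Lar_comm A B); tauto. Qed.

Lemma models_arrow_both_of_equivalent {I} (A B : algebra I) (a b c d : gterm I)
    (s t : lterm I) :
  JusAB A B a b c d s t -> ~ trivial A B s t ->
  (forall z, In z (zvars s) -> In z (zvars t)) ->
  (forall sB, gsub_ok (ar B) sB ->
     (denote B sB s = Some (geval B c) <-> denote B sB t = Some (geval B d))) ->
  models_arrow A B a b c d /\ models_arrow A B b a d c.
Proof.
  intros HJ Hnt Hz Hequiv.
  assert (Hnt_rev : ~ trivial A B t s)
    by (intro Htriv; apply Hnt, trivial_rev; [exact (proj1 HJ) | exact Htriv]).
  split.
  - apply models_arrow_of_determined with (s := s) (t := t); auto.
    intros sB HsB; apply Hequiv, HsB.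
  - apply models_arrow_of_determined with (s := t) (t := s);
      [apply JusAB_rev | |]; auto.
    intros sB HsB; apply Hequiv, HsB.
Qed.

Theorem mainTheorem1 (I : Type) (A B : algebra I) (a b c d : gterm I)
  (s t : lterm I) :
  gwf (ar A) a = true -> gwf (ar A) b = true ->
  gwf (ar B) c = true -> gwf (ar B) d = true ->
  JusAB A B a b c d s t -> ~ trivial A B s t ->
  (* (1) *)
  ((forall sB, gsub_ok (ar B) sB ->
      denote B sB s = Some (geval B c) -> denote B sB t = Some (geval B d)) ->
   characteristic_just A B a b c d s t /\ models_arrow A B a b c d)
  /\
  (* (2) *)
  ((forall sB, gsub_ok (ar B) sB ->
      (denote B sB s = Some (geval B c) <-> denote B sB t = Some (geval B d))) ->
   (forall z, In z (zvars s) -> In z (zvars t)) ->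
   models_arrow A B a b c d /\ models_arrow A B b a d c)
  /\
  (* (3) *)
  ((forall sA, gsub_ok (ar A) sA ->
      (denote A sA s = Some (geval A a) <-> denote A sA t = Some (geval A b))) ->
   (forall sB, gsub_ok (ar B) sB ->
      (denote B sB s = Some (geval B c) <-> denote B sB t = Some (geval B d))) ->
   (forall z, In z (zvars s) -> In z (zvars t)) ->
   models_prop A B a b c d).
Proof.
  intros _ _ _ _ HJ Hnt.
  split; [| split].
  - intro Hdet. split.
    + exact (characteristic_just_of_determined HJ Hdet).
    + exact (models_arrow_of_determined HJ Hnt Hdet).
  - intros HB Hz. exact (models_arrow_both_of_equivalent HJ Hnt Hz HB).
  - intros HA HB Hz.
    destruct (models_arrow_both_of_equivalent HJ Hnt Hz HB) as [Hab Hba].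
    assert (Hnt_flip : ~ trivial B A s t)
      by (intro Htriv; apply Hnt, trivial_flip, Htriv).
    destruct (models_arrow_both_of_equivalent (JusAB_flip HJ) Hnt_flip Hz HA)
      as [Hcd Hdc].
    repeat split; assumption.
Qed.
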